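(* Let $m\ge 3$ and let $C_1,\dots,C_m\subset\mathbb{R}^n$ be nonempty, closed, convex sets in general position, $C=C_1\times\cdots\times C_m$, and $D(x)=\sum_{i=1}^m\|x_i-x_{i+1}\|$ with $x_{m+1}=x_1$. If $x=(x_1,\dots,x_m)\in C$ has at least one component $x_i\in\operatorname{int}(C_i)$, then there exists $\bar x=(\bar x_1,\dots,\bar x_m)$ with $\bar x_i\in\operatorname{bd}(C_i)$ for every $i=1,\dots,m$ (so in particular $\bar x\in\operatorname{bd}(C)$) such that $D(\bar x)<D(x)$.
   Context: The family of nonempty closed convex sets $C_1,\dots,C_m\subset\mathbb{R}^n$ is in general position if for every $i$, $C_i\cap K_i=\varnothing$, where $K_i=\operatorname{conv}\big(\bigcup_{j\ne i}C_j\big)$ is the convex hull of the union of the other sets. $\operatorname{int}$ and $\operatorname{bd}$ denote interior and boundary in $\mathbb{R}^n$ (resp. in $\mathbb{R}^{mn}$ for $C$). *)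

(* R^n is 'rV[R]_n with its canonical
   (product = Euclidean) topology; the distance used in D is the Euclidean norm. *)
From HB Require Import structures.
From mathcomp Require Import all_boot all_order all_algebra.
From mathcomp Require Import all_classical all_reals all_analysis.
Set Implicit Arguments. Unset Strict Implicit. Unset Printing Implicit Defensive.
Import Order.TTheory GRing.Theory Num.Theory.
Import numFieldNormedType.Exports.
Local Open Scope classical_set_scope.
Local Open Scope ring_scope.

Section Defs.
Variables (R : realType) (n : nat).
Notation vec := 'rV[R]_n.

Definition enorm (v : vec) : R := Num.sqrt (\sum_(k < n) (v ord0 k) ^+ 2).

Definition convex_set_R (A : set vec) : Prop :=
  forall x y t, A x -> A y -> 0 <= t -> t <= 1 -> A (t *: x + (1 - t) *: y).

Definition conv_hull (S : set vec) : set vec :=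
  [set x | forall K : set vec, convex_set_R K -> S `<=` K -> K x].

Definition bd (A : set vec) : set vec := closure A `\` interior A.

Definition general_position (m : nat) (C : 'I_m -> set vec) : Prop :=
  forall i : 'I_m,
    C i `&` conv_hull (\bigcup_(j in [set j : 'I_m | j != i]) C j) = set0.

Definition Dlen (m : nat) (x : 'I_m -> vec) : R :=
  \sum_(i < m) enorm (x i - x (ordS i)).
End Defs.

From HB Require Import structures.
From mathcomp Require Import all_boot all_order all_algebra.
From mathcomp Require Import all_classical all_reals all_analysis.
From mathcomp Require Import ring lra zify.
Set Implicit Arguments. Unset Strict Implicit. Unset Printing Implicit Defensive.
Import Order.TTheory GRing.Theory Num.Theory.
Import numFieldNormedType.Exports.
Local Open Scope classical_set_scope.
Local Open Scope ring_scope.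

(* Replace a point x_i by the point where the segment from x_i to its predecessor
   a = x_(i-1) leaves C_i; a lies in the hull K_i, hence outside C_i.  Along that
   segment the two terms of D involving x_i form a convex function whose value at a
   is |a - x_(i+1)|; by general position x_i is not on the segment [a, x_(i+1)],
   which lies in K_i, so this value is strictly below the one at x_i.  Hence the move
   never increases D, and decreases it strictly when x_i is interior, because the
   exit point is then reached at a positive time.  Moving every point in turn puts
   all of them on the boundary. *)

Section Euclid.
Variables (R : realType) (n : nat).
Notation vec := 'rV[R]_n.
Implicit Types u v w a b x p : vec.

Definition dot u v : R := \sum_(k < n) u ord0 k * v ord0 k.

Definition segment a b : set vec :=
  [set z | exists2 t : R, 0 <= t <= 1 & z = t *: a + (1 - t) *: b].

Lemma dotC u v : dot u v = dot v u.
Proof. by apply: eq_bigr => k _; rewrite mulrC. Qed.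

Lemma dot0l v : dot 0 v = 0.
Proof. by rewrite /dot big1 // => k _; rewrite mxE mul0r. Qed.

Lemma dotDl u v w : dot (u + v) w = dot u w + dot v w.
Proof. by rewrite /dot -big_split; apply: eq_bigr => k _; rewrite mxE mulrDl. Qed.

Lemma dotZl c u v : dot (c *: u) v = c * dot u v.
Proof. by rewrite /dot mulr_sumr; apply: eq_bigr => k _; rewrite mxE mulrA. Qed.

Lemma dotDr u v w : dot w (u + v) = dot w u + dot w v.
Proof. by rewrite dotC dotDl !(dotC w). Qed.

Lemma dotZr c u v : dot v (c *: u) = c * dot v u.
Proof. by rewrite dotC dotZl dotC. Qed.

Lemma dotii_ge0 u : 0 <= dot u u.
Proof. by apply: sumr_ge0 => k _; rewrite -expr2 sqr_ge0. Qed.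

Lemma dotii_eq0 u : dot u u = 0 -> u = 0.
Proof.
move=> u0; apply/rowP => k; rewrite mxE.
have sq_ge0 (j : 'I_n) : true -> 0 <= u ord0 j * u ord0 j.
  by rewrite -expr2 sqr_ge0.
by move/eqP: (psumr_eq0P sq_ge0 u0 (i:=k) isT); rewrite mulf_eq0 orbb => /eqP.
Qed.

(* The vector of the Lagrange-identity proof of Cauchy-Schwarz. *)
Lemma dot_gram u v : let w := dot u u *: v - dot u v *: u in
  dot w w = dot u u * (dot u u * dot v v - dot u v ^+ 2).
Proof. by rewrite /= -scaleNr !(dotDl, dotDr, dotZl, dotZr) ?[dot v u]dotC; ring. Qed.

Lemma dot_sqr_le u v : dot u v ^+ 2 <= dot u u * dot v v.
Proof.
have [u0|uu_neq0] := eqVneq (dot u u) 0.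
  by rewrite (dotii_eq0 u0) !dot0l expr0n mul0r.
have uu_gt0 : 0 < dot u u by rewrite lt_neqAle eq_sym uu_neq0 dotii_ge0.
by have := dotii_ge0 (dot u u *: v - dot u v *: u); rewrite dot_gram pmulr_rge0 // subr_ge0.
Qed.

Lemma enormE u : enorm u = Num.sqrt (dot u u).
Proof. by rewrite /enorm /dot; congr Num.sqrt; apply: eq_bigr => k _; rewrite expr2. Qed.

Lemma enorm_sqr u : enorm u ^+ 2 = dot u u.
Proof. by rewrite enormE sqr_sqrtr ?dotii_ge0. Qed.

Lemma enorm_ge0 u : 0 <= enorm u.
Proof. exact: sqrtr_ge0. Qed.

Lemma enormZ c u : enorm (c *: u) = `|c| * enorm u.
Proof. by rewrite !enormE dotZl dotZr mulrA -expr2 sqrtrM ?sqr_ge0 // sqrtr_sqr. Qed.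

Lemma enorm0 : enorm (0 : vec) = 0.
Proof. by rewrite -(scale0r (0 : vec)) enormZ normr0 mul0r. Qed.

Lemma enormB u v : enorm (u - v) = enorm (v - u).
Proof. by rewrite -opprB -scaleN1r enormZ normrN normr1 mul1r. Qed.

Lemma dot_le_enorm u v : dot u v <= enorm u * enorm v.
Proof.
rewrite (le_trans (ler_norm _)) // -sqrtr_sqr -[X in _ <= X]ger0_norm; last first.
  by rewrite mulr_ge0 ?enorm_ge0.
by rewrite -sqrtr_sqr exprMn !enorm_sqr ler_wsqrtr // dot_sqr_le.
Qed.

Lemma enorm_sqrD u v :
  enorm (u + v) ^+ 2 = enorm u ^+ 2 + 2 * dot u v + enorm v ^+ 2.
Proof. by rewrite !enorm_sqr !(dotDl, dotDr) ?[dot v u]dotC; ring. Qed.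

Lemma enorm_triangle u v : enorm (u + v) <= enorm u + enorm v.
Proof.
have := enorm_sqrD u v; have := dot_le_enorm u v.
have := enorm_ge0 u; have := enorm_ge0 v; have := enorm_ge0 (u + v).
by nra.
Qed.

Lemma enorm_triangle_eq u v : enorm (u + v) = enorm u + enorm v ->
  u = 0 \/ exists2 l, 0 <= l & v = l *: u.
Proof.
move=> uv_eq; have uv_dot : dot u v = enorm u * enorm v.
  by have := enorm_sqrD u v; rewrite uv_eq; nra.
have [u0|uu_neq0] := eqVneq (dot u u) 0; [left; exact: dotii_eq0 | right].
have gram0 : dot u u *: v - dot u v *: u = 0.
  by apply: dotii_eq0; rewrite dot_gram uv_dot exprMn !enorm_sqr subrr mulr0.
exists (dot u v / dot u u); first by rewrite uv_dot divr_ge0 ?mulr_ge0 ?enorm_ge0 ?dotii_ge0.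
move/eqP: gram0; rewrite subr_eq0 => /eqP gram0.
by rewrite mulrC -scalerA -gram0 scalerA mulVf ?scale1r.
Qed.

(* The equality case of Cauchy-Schwarz puts [x] on the segment. *)
Lemma enorm_triangle_lt a b x : ~ segment a b x ->
  enorm (a - b) < enorm (a - x) + enorm (x - b).
Proof.
move=> x_off; have := enorm_triangle (a - x) (x - b).
rewrite le_eqVlt => /orP[/eqP ab_eq|]; last by rewrite addrA subrK.
exfalso; apply: x_off.
have [xa|[l l_ge0 xb]] := enorm_triangle_eq ab_eq.
  exists 1; rewrite ?ler01 ?lexx //; apply/rowP => k.
  by have := congr1 (fun M : vec => M ord0 k) xa; rewrite !mxE; lra.
have l1_neq0 : 1 + l != 0 by rewrite gt_eqF // ltr_pwDl.
exists (l / (1 + l)).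
  by rewrite divr_ge0 ?addr_ge0 //= ler_pdivrMr ?ltr_pwDl // mul1r lerDr.
apply/rowP => k; have := congr1 (fun M : vec => M ord0 k) xb; rewrite !mxE => xbk.
have xk : (1 + l) * x ord0 k = l * a ord0 k + b ord0 k.
  by move: xbk; rewrite mulrDl mulrBr mul1r; lra.
by rewrite -(mulKf l1_neq0 (x ord0 k)) xk; field.
Qed.

Lemma segment_sub_conv_hull (S : set vec) a b :
  S a -> S b -> segment a b `<=` conv_hull S.
Proof.
by move=> Sa Sb _ [t /andP[t_ge0 t_le1] ->] K K_convex SK; apply: K_convex => //; apply: SK.
Qed.

Lemma enorm_convex a x p t : 0 <= t <= 1 ->
  enorm (a - (x + t *: (p - x))) <= (1 - t) * enorm (a - x) + t * enorm (a - p).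
Proof.
move=> /andP[t_ge0 t_le1].
have -> : a - (x + t *: (p - x)) = (1 - t) *: (a - x) + t *: (a - p).
  by apply/rowP => k; rewrite !mxE; ring.
by rewrite (le_trans (enorm_triangle _ _)) // !enormZ !ger0_norm ?subr_ge0.
Qed.

End Euclid.

Section ExitPoint.
Variables (R : realType) (T : topologicalType).

(* The exit point is the supremum of the times at which the path is still in [A]. *)
Lemma closed_exit_point (A : set T) (y : R -> T) : continuous y -> closed A ->
  A (y 0) -> ~ A (y 1) -> exists2 t, 0 <= t <= 1 & A (y t) /\ ~ interior A (y t).
Proof.
move=> y_cont A_closed A0 A1.
pose S := `[(0 : R), 1] `&` (y @^-1` A).
have S0 : S 0 by split; rewrite //= in_itv /= lexx ler01.
have S_ub1 : ubound S 1 by move=> t [/=]; rewrite in_itv /= => /andP[_ ->].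
have S_sup : has_sup S by split; [exists 0 | exists 1].
have S_closed : closed S.
  apply: closedI; first exact: itv_closed.
  by apply: preimage_closed => // t _; exact: y_cont.
have S_ts : S (sup S).
  apply: (itv_closed_supremums (ex_intro _ 0 S0) S_closed); split.
    exact: sup_upper_bound.
  by move=> z Sz; exact: ge_sup (ex_intro _ 0 S0) Sz.
case: S_ts => /=; rewrite in_itv /= => /andP[ts_ge0 ts_le1] A_ts.
exists (sup S); rewrite ?ts_ge0 //; split => // A_int.
have ts_lt1 : sup S < 1.
  by rewrite lt_neqAle ts_le1 andbT; apply: contraPneq A1 => <-.
have /nbhs_ballP[e /= e_gt0 e_ball] : nbhs (sup S) (y @^-1` A) by exact: y_cont.
set mn := Num.min e (1 - sup S); pose d := mn / 2.
have mn_gt0 : 0 < mn by rewrite lt_min e_gt0 subr_gt0.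
have mn_le : mn <= e /\ mn <= 1 - sup S by rewrite !ge_min !lexx orbT.
have d_gt0 : 0 < d by rewrite divr_gt0.
have [d_lte d_le1] : d < e /\ d <= 1 - sup S by rewrite /d; case: mn_le; lra.
have S_td : S (sup S + d).
  split; first by rewrite /= in_itv /=; apply/andP; split; lra.
  apply: e_ball; rewrite -ball_normE /ball_ /= opprD addrA subrr add0r normrN.
  by rewrite gtr0_norm.
by have := sup_upper_bound S_sup S_td; lra.
Qed.

End ExitPoint.

Lemma segment_exit_bd (R : realType) (n : nat) (A : set 'rV[R]_n) (x p : 'rV[R]_n) :
  closed A -> A x -> ~ A p ->
  exists2 t, 0 <= t <= 1 & [/\ A (x + t *: (p - x)), bd A (x + t *: (p - x))
                            & (interior A x -> 0 < t)].
Proof.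
move=> A_closed Ax Ap.
have y_cont : continuous (fun t : R => x + t *: (p - x)).
  by move=> t; apply: cvgD; [exact: cvg_cst | exact: scalel_continuous].
have A0 : A (x + 0 *: (p - x)) by rewrite scale0r addr0.
have A1 : ~ A (x + 1 *: (p - x)) by rewrite scale1r addrC subrK.
have [t t01 [Az A_int]] := closed_exit_point y_cont A_closed A0 A1.
exists t => //; split => //; first by split => //; exact: subset_closure.
move=> x_int; rewrite lt_neqAle; case/andP: t01 => -> _; rewrite andbT.
by apply: contraPneq A_int => <-; rewrite scale0r addr0.
Qed.

Section CyclicMoves.
Variables (R : realType) (n m : nat).
Notation vec := 'rV[R]_n.
Hypothesis m_gt1 : (1 < m)%N.
Implicit Types (x : 'I_m -> vec) (i j : 'I_m).

Lemma ordS_neq i : ordS i != i.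
Proof.
apply/eqP => /(congr1 val) /=; case: (ltngtP i.+1 m) => [lt_im|gt_im|eq_im].
- by rewrite modn_small // => /eqP; rewrite eqn_leq ltnn.
- by have := ltn_ord i; lia.
- move=> Si; have : (i.+1 %% i.+1 = i)%N by rewrite {2}eq_im.
  by rewrite modnn => i0; move: m_gt1; rewrite -eq_im -i0.
Qed.

Lemma ord_pred_neq i : ord_pred i != i.
Proof. by apply: contra_neq (ordS_neq (ord_pred i)) => pred_i; rewrite ord_predK pred_i. Qed.

Definition upd x i (z : vec) : 'I_m -> vec := fun j => if j == i then z else x j.

Lemma Dlen_split x i : Dlen x =
  enorm (x (ord_pred i) - x i) + enorm (x i - x (ordS i)) +
  \sum_(j | (j != i) && (j != ord_pred i)) enorm (x j - x (ordS j)).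
Proof.
rewrite /Dlen (bigD1 i) //= (bigD1 (ord_pred i)) ?ord_pred_neq //= ord_predK.
by rewrite addrA [X in X + _]addrC.
Qed.

Lemma Dlen_upd x i z :
  Dlen (upd x i z) - Dlen x =
  (enorm (x (ord_pred i) - z) + enorm (z - x (ordS i))) -
  (enorm (x (ord_pred i) - x i) + enorm (x i - x (ordS i))).
Proof.
rewrite !(Dlen_split _ i) /upd eqxx (negbTE (ord_pred_neq i)) (negbTE (ordS_neq i)).
rewrite (eq_bigr (fun j => enorm (x j - x (ordS j)))); first by lra.
move=> j /andP[ji jp]; rewrite (negbTE ji); case: eqP => // Sji.
by move: jp; rewrite -Sji ordSK eqxx.
Qed.

Variable C : 'I_m -> set vec.
Hypotheses (C_closed : forall i, closed (C i)) (C_gp : general_position C).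

Lemma upd_in x i z : (forall j, C j (x j)) -> C i z -> forall j, C j (upd x i z j).
Proof. by move=> Cx Cz j; rewrite /upd; case: eqP => [->|]. Qed.

Lemma gp_notin_segment x i : (forall j, C j (x j)) ->
  forall w, C i w -> ~ segment (x (ord_pred i)) (x (ordS i)) w.
Proof.
move=> Cx w Cw seg_w; have /seteqP[+ _] := C_gp i; apply; split; first exact: Cw.
apply: segment_sub_conv_hull seg_w.
- by exists (ord_pred i); [exact: ord_pred_neq | exact: Cx].
- by exists (ordS i); [exact: ordS_neq | exact: Cx].
Qed.

Lemma Dlen_move_to_bd x i : (forall j, C j (x j)) ->
  exists z, [/\ C i z, bd (C i) z, Dlen (upd x i z) <= Dlen x
              & interior (C i) (x i) -> Dlen (upd x i z) < Dlen x].
Proof.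
move=> Cx; set a := x (ord_pred i); set b := x (ordS i).
have a_notin : ~ C i a.
  move=> Ca; apply: (gp_notin_segment Cx Ca); exists 1; rewrite ?ler01 ?lexx //.
  by rewrite scale1r subrr scale0r addr0.
have [t t01 [Cz bdz t_gt0]] := segment_exit_bd (@C_closed i) (Cx i) a_notin.
set z := x i + t *: (a - x i) in Cz bdz *; exists z.
have za := enorm_convex a (x i) a t01; rewrite -/z subrr enorm0 mulr0 addr0 in za.
have zb := enorm_convex b (x i) a t01; rewrite -/z in zb.
have ab_lt := enorm_triangle_lt (gp_notin_segment Cx (Cx i)).
rewrite -/a -/b (enormB (x i) b) (enormB a b) in ab_lt.
set F := enorm (a - x i) + enorm (b - x i) in ab_lt.
have Dz : Dlen (upd x i z) - Dlen x <= t * (enorm (b - a) - F).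
  by rewrite Dlen_upd -/a -/b (enormB z b) (enormB (x i) b) /F; nra.
case/andP: t01 => t_ge0 _.
have gain_le0 : t * (enorm (b - a) - F) <= 0 by rewrite mulr_ge0_le0 // subr_le0 ltW.
split => //; first by rewrite -subr_le0 (le_trans Dz).
by move=> /t_gt0 t_pos; rewrite -subr_lt0 (le_lt_trans Dz) // pmulr_rlt0 // subr_lt0.
Qed.

Lemma Dlen_all_bd x : (forall j, C j (x j)) ->
  exists xb, (forall j, bd (C j) (xb j)) /\ Dlen xb <= Dlen x.
Proof.
move=> Cx.
suff /(_ m (leqnn m)) [y [_ y_bd Dy]] : forall k, (k <= m)%N -> exists y,
    [/\ forall j, C j (y j), forall j : 'I_m, (j < k)%N -> bd (C j) (y j)
      & Dlen y <= Dlen x].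
  by exists y; split => // j; exact: y_bd.
elim=> [|k IHk] k_le; first by exists x.
have [y [Cy y_bd Dy]] := IHk (ltnW k_le).
have [z [Cz bdz Dz _]] := Dlen_move_to_bd (Ordinal k_le) Cy.
exists (upd y (Ordinal k_le) z); split.
- exact: upd_in.
- move=> j; rewrite ltnS leq_eqVlt /upd => /orP[/eqP jk|/y_bd bdj].
    by rewrite (_ : j = Ordinal k_le) ?eqxx //; apply: val_inj.
  by case: eqP => // ->.
- exact: le_trans Dz Dy.
Qed.

End CyclicMoves.

Theorem mainTheorem2 (R : realType) (n m : nat) (C : 'I_m -> set 'rV[R]_n) :
  (3 <= m)%N ->
  (forall i, C i !=set0) ->
  (forall i, closed (C i)) ->
  (forall i, convex_set_R (C i)) ->
  general_position C ->
  forall x : 'I_m -> 'rV[R]_n,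
    (forall i, C i (x i)) ->
    (exists i, interior (C i) (x i)) ->
    exists xb : 'I_m -> 'rV[R]_n,
      (forall i, bd (C i) (xb i)) /\ Dlen xb < Dlen x.
Proof.
move=> m_ge3 _ C_closed _ C_gp x Cx [i xi_int].
have m_gt1 : (1 < m)%N by apply: ltnW.
have [z [Cz _ _ Dz]] := Dlen_move_to_bd m_gt1 C_closed C_gp i Cx.
have [xb [xb_bd Dxb]] := Dlen_all_bd m_gt1 C_closed C_gp (upd_in Cx Cz).
by exists xb; split => //; exact: le_lt_trans Dxb (Dz xi_int).
Qed.
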